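(* Let $\mathbb{S}$ be the Sorgenfrey line and let $\Delta_2=\{(x,y)\in\mathbb{S}^2: x\leq y\}$ with the subspace topology from $\mathbb{S}^2$. Then $\Delta_2$ and $\mathbb{S}^2$ are homeomorphic.
   Context: The Sorgenfrey line $\mathbb{S}$ is the real line with the topology generated by half-open intervals $[a,b[$; $\mathbb{S}^2$ carries the product topology. *)

From Stdlib Require Import Reals.
Open Scope R_scope.

Definition sorgenfrey_open (U : R -> Prop) : Prop :=
  forall x, U x -> exists a b, a <= x < b /\ (forall t, a <= t < b -> U t).

Definition sorgenfrey2_open (W : R * R -> Prop) : Prop :=
  forall p, W p -> exists U V : R -> Prop,
    sorgenfrey_open U /\ sorgenfrey_open V /\ U (fst p) /\ V (snd p) /\
    (forall q, U (fst q) -> V (snd q) -> W q).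

Definition Delta2 : Type := { p : R * R | fst p <= snd p }.

Definition Delta2_open (O : Delta2 -> Prop) : Prop :=
  exists W, sorgenfrey2_open W /\ forall d : Delta2, O d <-> W (proj1_sig d).

Definition Delta2_homeomorphic_S2 : Prop :=
  exists (f : Delta2 -> R * R) (g : R * R -> Delta2),
    (forall d, g (f d) = d) /\ (forall q, f (g q) = q) /\
    (forall W, sorgenfrey2_open W -> Delta2_open (fun d => W (f d))) /\
    (forall O, Delta2_open O -> sorgenfrey2_open (fun q => O (g q))).

From Stdlib Require Import Reals Lra Lia ZArith ClassicalEpsilon ProofIrrelevance.
Open Scope R_scope.

(* Both homeomorphisms preserve the first coordinate.  Over [u], the fibre
   [u, +oo[ of Delta_2 is split into the point [u], the strip
   ]u, floor u + 2[ and unit intervals beyond it; the fibre R of S^2 is split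
   into 0, ]0, 1[ and the unit intervals [n, n+1[ with n <> 0.  Unit
   intervals are matched by integer translations depending only on floor u.
   The strip is mapped onto ]0, 1[ piecewise affinely, [grid u (k+1), grid u k[
   going onto [2^-(k+1), 2^-k[, where 2^-k < grid u k - u <= 2^(1-k).  Since
   [grid u k] depends on [u] only through floor (2^k u), it is locally
   constant to the right, which makes the maps Sorgenfrey continuous inside
   the strip; the estimate on [grid u k - u] gives continuity at the
   diagonal. *)

Lemma Int_part_bounds x : IZR (Int_part x) <= x < IZR (Int_part x) + 1.
Proof. destruct (base_Int_part x); lra. Qed.

Lemma Int_part_eq x z : IZR z <= x < IZR z + 1 -> Int_part x = z.
Proof. intros Hz; symmetry; apply Int_part_spec; lra. Qed.

Lemma Int_part_lb x z : IZR z <= x -> (z <= Int_part x)%Z.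
Proof.
  intros Hz; destruct (Int_part_bounds x).
  enough (z < Int_part x + 1)%Z by lia.
  apply lt_IZR; rewrite plus_IZR; simpl; lra.
Qed.

Lemma Int_part_neq0 y : Int_part y <> 0%Z <-> y < 0 \/ 1 <= y.
Proof.
  destruct (Int_part_bounds y) as [Hl Hu]; split.
  - intros Hy; destruct (Z.lt_ge_cases (Int_part y) 0) as [Hn|Hn].
    + left; apply Z.lt_le_pred in Hn; apply IZR_le in Hn; simpl in Hn; lra.
    + right; assert (Hp : (1 <= Int_part y)%Z) by lia.
      apply IZR_le in Hp; simpl in Hp; lra.
  - intros Hy Heq; rewrite Heq in *; simpl in *; lra.
Qed.

Lemma Int_part_frac_add y z : Int_part (frac_part y + IZR z) = z.
Proof. apply Int_part_eq; destruct (base_fp y); lra. Qed.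

Lemma frac_part_frac_add y z : frac_part (frac_part y + IZR z) = frac_part y.
Proof. unfold frac_part at 1; rewrite Int_part_frac_add; ring. Qed.

Definition near_right (x : R) (P : R -> Prop) : Prop :=
  exists eta, 0 < eta /\ forall y, x <= y < x + eta -> P y.

Lemma near_right_true x : near_right x (fun _ => True).
Proof. exists 1; split; [lra | easy]. Qed.

Lemma near_right_lt x b : x < b -> near_right x (fun y => y < b).
Proof. intros Hxb; exists (b - x); split; [lra | intros y Hy; lra]. Qed.

Lemma near_right_and x P Q :
  near_right x P -> near_right x Q -> near_right x (fun y => P y /\ Q y).
Proof.
  intros [e1 [He1 H1]] [e2 [He2 H2]].
  exists (Rmin e1 e2); split; [now apply Rmin_pos|].
  pose proof (Rmin_l e1 e2); pose proof (Rmin_r e1 e2).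
  intros y Hy; split; [apply H1 | apply H2]; lra.
Qed.

Lemma near_right_Int_part x : near_right x (fun y => Int_part y = Int_part x).
Proof.
  destruct (Int_part_bounds x).
  exists (IZR (Int_part x) + 1 - x); split; [lra|].
  intros y Hy; apply Int_part_eq; lra.
Qed.

Lemma near_right_scale x s P :
  0 < s -> near_right (x * s) P -> near_right x (fun y => P (y * s)).
Proof.
  intros Hs [eta [Heta HP]]; exists (eta / s); split.
  - now apply Rdiv_lt_0_compat.
  - intros y Hy; apply HP; split.
    + apply Rmult_le_compat_r; lra.
    + replace (x * s + eta) with ((x + eta / s) * s) by (field; lra).
      apply Rmult_lt_compat_r; lra.
Qed.

Definition right_lipschitz_at (f : R * R -> R) (p : R * R) : Prop :=
  exists L eta, 0 <= L /\ 0 < eta /\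
    forall q, fst p <= fst q < fst p + eta -> snd p <= snd q < snd p + eta ->
      f p <= f q <= f p + L * (fst q - fst p + (snd q - snd p)).

Lemma right_lipschitz_at_intro f p L (A B : R -> Prop) :
  0 <= L -> near_right (fst p) A -> near_right (snd p) B ->
  (forall q, fst p <= fst q -> snd p <= snd q -> A (fst q) -> B (snd q) ->
     f p <= f q <= f p + L * (fst q - fst p + (snd q - snd p))) ->
  right_lipschitz_at f p.
Proof.
  intros HL [e1 [He1 HA]] [e2 [He2 HB]] Hf.
  exists L, (Rmin e1 e2); split; [easy|]; split; [now apply Rmin_pos|].
  pose proof (Rmin_l e1 e2); pose proof (Rmin_r e1 e2).
  intros q Hq1 Hq2; apply Hf; [lra | lra | apply HA | apply HB]; lra.
Qed.

Lemma right_lipschitz_at_snd f g M p (A B : R -> Prop) :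
  0 <= M -> (forall t t', t <= t' -> g t <= g t' <= g t + M * (t' - t)) ->
  near_right (fst p) A -> near_right (snd p) B ->
  (forall q, fst p <= fst q -> snd p <= snd q -> A (fst q) -> B (snd q) ->
     f q = g (snd q)) ->
  right_lipschitz_at f p.
Proof.
  intros HM Hg HA HB Hf.
  apply (right_lipschitz_at_intro _ _ M A B HM HA HB).
  assert (Hp : f p = g (snd p)).
  { destruct HA as [e1 [He1 HA]], HB as [e2 [He2 HB]].
    apply Hf; [lra | lra | apply HA | apply HB]; lra. }
  intros q Hq1 Hq2 HAq HBq; rewrite (Hf q Hq1 Hq2 HAq HBq), Hp.
  destruct (Hg (snd p) (snd q) Hq2).
  assert (M * (snd q - snd p) <= M * (fst q - fst p + (snd q - snd p)))
    by (apply Rmult_le_compat_l; lra).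
  lra.
Qed.

Lemma interval_open a b : sorgenfrey_open (fun t => a <= t < b).
Proof. intros x Hx; now exists a, b. Qed.

Lemma sorgenfrey2_open_ext W W' :
  (forall p, W p <-> W' p) -> sorgenfrey2_open W -> sorgenfrey2_open W'.
Proof.
  intros HWW' HW p Hp; apply HWW' in Hp.
  destruct (HW p Hp) as (U & V & HU & HV & HUp & HVp & HUV).
  exists U, V; repeat split; auto.
  intros q HUq HVq; now apply HWW', HUV.
Qed.

Lemma sorgenfrey2_open_fibered f W :
  (forall p, right_lipschitz_at f p) -> sorgenfrey2_open W ->
  sorgenfrey2_open (fun p => W (fst p, f p)).
Proof.
  intros Hf HW p Hp.
  destruct (HW _ Hp) as (U & V & HU & HV & HUp & HVp & HUV); simpl in *.
  destruct (HU _ HUp) as (a & b & Hab & HabU).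
  destruct (HV _ HVp) as (c & d & Hcd & HcdV).
  destruct (Hf p) as (L & eta & HL & Heta & Hnear).
  set (e := Rmin eta (Rmin (b - fst p) ((d - f p) / (2 * L + 1)))).
  assert (He : 0 < e).
  { apply Rmin_pos; [easy|]; apply Rmin_pos; [lra|].
    apply Rdiv_lt_0_compat; lra. }
  assert (He1 : e <= eta) by apply Rmin_l.
  assert (He2 : e <= b - fst p) by (eapply Rle_trans; [apply Rmin_r | apply Rmin_l]).
  assert (He3 : (2 * L + 1) * e <= d - f p).
  { apply Rle_trans with ((2 * L + 1) * ((d - f p) / (2 * L + 1))).
    - apply Rmult_le_compat_l; [lra|].
      eapply Rle_trans; [apply Rmin_r | apply Rmin_r].
    - right; field; lra. }
  exists (fun t => fst p <= t < fst p + e), (fun t => snd p <= t < snd p + e).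
  repeat split; try apply interval_open; try lra.
  intros q Hq1 Hq2.
  destruct (Hnear q) as [Hlo Hhi]; [lra | lra |].
  apply (HUV (fst q, f q)); simpl; [apply HabU | apply HcdV]; [lra | split; [lra|]].
  nra.
Qed.

Definition affine_between (a1 a0 b1 b0 t : R) : R :=
  b1 + (t - a1) * ((b0 - b1) / (a0 - a1)).

Section AffineBetween.

Variables a1 a0 b1 b0 : R.
Hypotheses (Ha : a1 < a0) (Hb : b1 < b0).

Lemma affine_between_lipschitz t t' : t <= t' ->
  affine_between a1 a0 b1 b0 t <= affine_between a1 a0 b1 b0 t' <=
  affine_between a1 a0 b1 b0 t + (b0 - b1) / (a0 - a1) * (t' - t).
Proof.
  intros Htt'; unfold affine_between.
  assert (0 < (b0 - b1) / (a0 - a1)) by (apply Rdiv_lt_0_compat; lra).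
  nra.
Qed.

Lemma affine_between_mem t :
  a1 <= t < a0 -> b1 <= affine_between a1 a0 b1 b0 t < b0.
Proof.
  intros Ht; unfold affine_between.
  set (s := (b0 - b1) / (a0 - a1)).
  assert (0 < s) by (apply Rdiv_lt_0_compat; lra).
  assert ((a0 - a1) * s = b0 - b1) by (unfold s; field; lra).
  split; nra.
Qed.

Lemma affine_betweenK t :
  affine_between b1 b0 a1 a0 (affine_between a1 a0 b1 b0 t) = t.
Proof. unfold affine_between; field; lra. Qed.

End AffineBetween.

Definition piece (a : nat -> R) (t : R) : nat :=
  epsilon (inhabits 0%nat) (fun k => a (S k) <= t < a k).

Definition interp (a b : nat -> R) (t : R) : R :=
  let k := piece a t in affine_between (a (S k)) (a k) (b (S k)) (b k) t.

Lemma decreasing_le (a : nat -> R) :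
  (forall k, a (S k) < a k) -> forall m n, (m <= n)%nat -> a n <= a m.
Proof. intros Ha m n Hmn; induction Hmn as [|n _ IH]; [lra | specialize (Ha n); lra]. Qed.

Lemma piece_eq (a : nat -> R) t k :
  (forall j, a (S j) < a j) -> a (S k) <= t < a k -> piece a t = k.
Proof.
  intros Ha Hk; unfold piece.
  pose proof (epsilon_spec (inhabits 0%nat) (fun k => a (S k) <= t < a k)
                (ex_intro _ k Hk)) as Hj.
  set (j := epsilon _ _) in *; simpl in Hj.
  destruct (Nat.lt_trichotomy j k) as [Hjk | [Hjk | Hjk]]; [| easy |].
  - pose proof (decreasing_le a Ha (S j) k Hjk); lra.
  - pose proof (decreasing_le a Ha (S k) j Hjk); lra.
Qed.

Lemma piece_exists (a : nat -> R) l t :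
  (forall e, 0 < e -> exists n, a n < l + e) -> l < t < a 0%nat ->
  exists k, a (S k) <= t < a k.
Proof.
  intros Hlim Ht; destruct (Hlim (t - l)) as [n Hn]; [lra|].
  assert (Han : a n <= t) by lra; clear Hn.
  induction n as [|n IH]; [lra|].
  destruct (Rle_lt_dec (a n) t); [now apply IH | now exists n].
Qed.

Section Interpolation.

Variables a b : nat -> R.
Hypotheses (a_decr : forall k, a (S k) < a k) (b_decr : forall k, b (S k) < b k).

Lemma interp_eq t k : a (S k) <= t < a k ->
  interp a b t = affine_between (a (S k)) (a k) (b (S k)) (b k) t.
Proof. intros Hk; unfold interp; now rewrite (piece_eq a t k a_decr Hk). Qed.

Lemma interp_mem t k : a (S k) <= t < a k -> b (S k) <= interp a b t < b k.
Proof. intros Hk; rewrite (interp_eq t k Hk); now apply affine_between_mem. Qed.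

Lemma interpK t k : a (S k) <= t < a k -> interp b a (interp a b t) = t.
Proof.
  intros Hk; pose proof (interp_mem t k Hk) as Hbk.
  rewrite (interp_eq t k Hk) in *; unfold interp.
  rewrite (piece_eq b _ k b_decr Hbk); now apply affine_betweenK.
Qed.

Lemma interp_le_limit la lb M t k :
  0 <= M -> (forall j, b j - lb <= M * (a (S j) - la)) ->
  a (S k) <= t < a k -> interp a b t - lb <= M * (t - la).
Proof.
  intros HM Hab Hk; pose proof (interp_mem t k Hk); specialize (Hab k).
  assert (M * (a (S k) - la) <= M * (t - la)) by (apply Rmult_le_compat_l; lra).
  lra.
Qed.

End Interpolation.

Definition dyadic (k : nat) : R := / 2 ^ k.

Lemma dyadic_pos k : 0 < dyadic k.
Proof. apply Rinv_0_lt_compat, pow_lt; lra. Qed.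

Lemma dyadic_0 : dyadic 0 = 1.
Proof. apply Rinv_1. Qed.

Lemma dyadic_S k : dyadic (S k) = dyadic k / 2.
Proof. unfold dyadic; simpl; field; apply pow_nonzero; lra. Qed.

Lemma dyadic_decr k : dyadic (S k) < dyadic k.
Proof. rewrite dyadic_S; pose proof (dyadic_pos k); lra. Qed.

Lemma dyadic_small e : 0 < e -> exists n, dyadic n < e.
Proof.
  intros He; destruct (pow_lt_1_zero (/ 2)) with (y := e) as [n Hn];
    [rewrite Rabs_pos_eq; lra | easy |].
  exists n; specialize (Hn n (le_n n)).
  rewrite pow_inv, Rabs_pos_eq in Hn; [easy|].
  apply Rlt_le, Rinv_0_lt_compat, pow_lt; lra.
Qed.

(* The second point of the grid 2^-k Z strictly to the right of [u]. *)
Definition grid (u : R) (k : nat) : R := (IZR (Int_part (u * 2 ^ k)) + 2) * dyadic k.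

Lemma grid_0 u : grid u 0 = IZR (Int_part u) + 2.
Proof. unfold grid; rewrite dyadic_0; simpl; rewrite !Rmult_1_r; reflexivity. Qed.

Lemma grid_bounds u k : u + dyadic k < grid u k <= u + 2 * dyadic k.
Proof.
  unfold grid; destruct (Int_part_bounds (u * 2 ^ k)).
  assert (u = u * 2 ^ k * dyadic k)
    by (unfold dyadic; field; apply pow_nonzero; lra).
  pose proof (dyadic_pos k); split; nra.
Qed.

Lemma grid_decr u k : grid u (S k) < grid u k.
Proof.
  unfold grid; rewrite dyadic_S.
  replace (u * 2 ^ S k) with (2 * (u * 2 ^ k)) by (simpl; ring).
  set (x := u * 2 ^ k).
  assert (Hx : (Int_part (2 * x) <= 2 * Int_part x + 1)%Z).
  { enough (Int_part (2 * x) < 2 * Int_part x + 2)%Z by lia.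
    apply lt_IZR; destruct (Int_part_bounds x), (Int_part_bounds (2 * x)).
    rewrite plus_IZR, mult_IZR; simpl; lra. }
  apply IZR_le in Hx; rewrite plus_IZR, mult_IZR in Hx; simpl in Hx.
  pose proof (dyadic_pos k); nra.
Qed.

Lemma grid_near_right u k : near_right u (fun u' => grid u' k = grid u k).
Proof.
  destruct (near_right_scale u (2 ^ k) _ (pow_lt 2 k ltac:(lra))
              (near_right_Int_part (u * 2 ^ k))) as [e [He H]].
  exists e; split; [easy|]; intros u' Hu'; unfold grid; now rewrite (H u' Hu').
Qed.

Lemma grid_piece u v : u < v < grid u 0 -> exists k, grid u (S k) <= v < grid u k.
Proof.
  apply piece_exists; intros e He.
  destruct (dyadic_small (e / 2)) as [n Hn]; [lra|].
  exists n; pose proof (grid_bounds u n); lra.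
Qed.

Lemma dyadic_piece y : 0 < y < 1 -> exists k, dyadic (S k) <= y < dyadic k.
Proof.
  intros Hy; apply (piece_exists dyadic 0).
  - intros e He; rewrite Rplus_0_l; now apply dyadic_small.
  - rewrite dyadic_0; lra.
Qed.

Lemma interp_grid_unit u v : u < v < grid u 0 -> 0 < interp (grid u) dyadic v < 1.
Proof.
  intros Hv; destruct (grid_piece u v Hv) as [k Hk].
  pose proof (interp_mem _ _ (grid_decr u) dyadic_decr v k Hk).
  pose proof (dyadic_pos (S k)).
  pose proof (decreasing_le dyadic dyadic_decr 0 k (Nat.le_0_l k)).
  rewrite dyadic_0 in *; lra.
Qed.

Lemma interp_dyadic_strip x y :
  0 < y < 1 -> x < interp dyadic (grid x) y < grid x 0.
Proof.
  intros Hy; destruct (dyadic_piece y Hy) as [k Hk].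
  pose proof (interp_mem _ _ dyadic_decr (grid_decr x) y k Hk).
  pose proof (grid_bounds x (S k)); pose proof (dyadic_pos (S k)).
  pose proof (decreasing_le (grid x) (grid_decr x) 0 k (Nat.le_0_l k)).
  lra.
Qed.

Lemma interp_gridK u v :
  u < v < grid u 0 -> interp dyadic (grid u) (interp (grid u) dyadic v) = v.
Proof.
  intros Hv; destruct (grid_piece u v Hv) as [k Hk].
  exact (interpK _ _ (grid_decr u) dyadic_decr v k Hk).
Qed.

Lemma interp_dyadicK x y :
  0 < y < 1 -> interp (grid x) dyadic (interp dyadic (grid x) y) = y.
Proof.
  intros Hy; destruct (dyadic_piece y Hy) as [k Hk].
  exact (interpK _ _ dyadic_decr (grid_decr x) y k Hk).
Qed.

(* Beyond the strip, Delta_2 is the union of the unit squares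
   [m, m+1[ x [m+d, m+d+1[ with d >= 2, and the rest of S^2 is the union of
   the unit squares [m, m+1[ x [n, n+1[ with n <> 0; the bijection
   [row_of_gap] from d to n matches them by vertical translations. *)
Definition row_of_gap (d : Z) : Z :=
  if (d mod 2 =? 0)%Z then (- (d / 2))%Z else (d / 2)%Z.

Definition gap_of_row (n : Z) : Z :=
  if (n <? 0)%Z then (- 2 * n)%Z else (2 * n + 1)%Z.

Lemma row_of_gap_neq0 d : (2 <= d)%Z -> row_of_gap d <> 0%Z.
Proof.
  intros Hd; unfold row_of_gap.
  destruct (Z.eqb_spec (d mod 2) 0); Z.div_mod_to_equations; lia.
Qed.

Lemma gap_of_row_ge2 n : n <> 0%Z -> (2 <= gap_of_row n)%Z.
Proof. intros Hn; unfold gap_of_row; destruct (Z.ltb_spec n 0); lia. Qed.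

Lemma row_of_gapK d : (2 <= d)%Z -> gap_of_row (row_of_gap d) = d.
Proof.
  intros Hd; unfold row_of_gap, gap_of_row.
  destruct (Z.eqb_spec (d mod 2) 0) as [He|He];
    [destruct (Z.ltb_spec (- (d / 2)) 0) | destruct (Z.ltb_spec (d / 2) 0)];
    Z.div_mod_to_equations; lia.
Qed.

Lemma gap_of_rowK n : n <> 0%Z -> row_of_gap (gap_of_row n) = n.
Proof.
  intros Hn; unfold row_of_gap, gap_of_row.
  destruct (Z.ltb_spec n 0);
    [destruct (Z.eqb_spec ((- 2 * n) mod 2) 0) | destruct (Z.eqb_spec ((2 * n + 1) mod 2) 0)];
    Z.div_mod_to_equations; lia.
Qed.

Definition far_code (u v : R) : R :=
  frac_part v + IZR (row_of_gap (Int_part v - Int_part u)).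

Definition far_decode (x y : R) : R :=
  frac_part y + IZR (Int_part x + gap_of_row (Int_part y)).

Lemma beyond_strip u v : grid u 0 <= v -> (2 <= Int_part v - Int_part u)%Z.
Proof.
  rewrite grid_0; intros Hv.
  enough (Int_part u + 2 <= Int_part v)%Z by lia.
  apply Int_part_lb; now rewrite plus_IZR.
Qed.

Lemma far_code_outside u v :
  (2 <= Int_part v - Int_part u)%Z -> far_code u v < 0 \/ 1 <= far_code u v.
Proof.
  intros Hd; apply Int_part_neq0; unfold far_code.
  rewrite Int_part_frac_add; now apply row_of_gap_neq0.
Qed.

Lemma far_decode_beyond x y : y < 0 \/ 1 <= y -> grid x 0 <= far_decode x y.
Proof.
  intros Hy; apply Int_part_neq0, gap_of_row_ge2, IZR_le in Hy.
  rewrite grid_0; unfold far_decode; rewrite plus_IZR.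
  destruct (base_fp y); lra.
Qed.

Lemma far_codeK u v :
  (2 <= Int_part v - Int_part u)%Z -> far_decode u (far_code u v) = v.
Proof.
  intros Hd; unfold far_decode, far_code.
  rewrite frac_part_frac_add, Int_part_frac_add, row_of_gapK by easy.
  unfold frac_part; rewrite plus_IZR, minus_IZR; ring.
Qed.

Lemma far_decodeK x y : y < 0 \/ 1 <= y -> far_code x (far_decode x y) = y.
Proof.
  intros Hy; apply Int_part_neq0 in Hy; unfold far_code, far_decode.
  rewrite frac_part_frac_add, Int_part_frac_add.
  replace (Int_part x + gap_of_row (Int_part y) - Int_part x)%Z
    with (gap_of_row (Int_part y)) by ring.
  rewrite gap_of_rowK by easy; unfold frac_part; ring.
Qed.

Lemma far_code_translate u v u' v' :
  Int_part u' = Int_part u -> Int_part v' = Int_part v ->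
  far_code u' v' = far_code u v + (v' - v).
Proof. intros Hu Hv; unfold far_code, frac_part; rewrite Hu, Hv; ring. Qed.

Lemma far_decode_translate x y x' y' :
  Int_part x' = Int_part x -> Int_part y' = Int_part y ->
  far_decode x' y' = far_decode x y + (y' - y).
Proof. intros Hx Hy; unfold far_decode, frac_part; rewrite Hx, Hy; ring. Qed.

(* Below the diagonal [phi] is 0, so that (u, v) |-> (u, phi (u, v)) is
   continuous on all of S^2. *)
Definition phi (p : R * R) : R :=
  if Rle_dec (snd p) (fst p) then 0
  else if Rlt_dec (snd p) (grid (fst p) 0) then interp (grid (fst p)) dyadic (snd p)
  else far_code (fst p) (snd p).

Definition gamma (q : R * R) : R :=
  if Rlt_dec (snd q) 0 then far_decode (fst q) (snd q)
  else if Rle_dec (snd q) 0 then fst q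
  else if Rlt_dec (snd q) 1 then interp dyadic (grid (fst q)) (snd q)
  else far_decode (fst q) (snd q).

Lemma phi_below u v : v <= u -> phi (u, v) = 0.
Proof. intros Hv; unfold phi; simpl; now destruct (Rle_dec v u). Qed.

Lemma phi_near u v : u < v < grid u 0 -> phi (u, v) = interp (grid u) dyadic v.
Proof.
  intros Hv; unfold phi; simpl.
  destruct (Rle_dec v u); [lra|]; destruct (Rlt_dec v (grid u 0)); [easy | lra].
Qed.

Lemma phi_far u v : grid u 0 <= v -> phi (u, v) = far_code u v.
Proof.
  intros Hv; pose proof (grid_bounds u 0); rewrite dyadic_0 in *; unfold phi; simpl.
  destruct (Rle_dec v u); [lra|]; destruct (Rlt_dec v (grid u 0)); [lra | easy].
Qed.

Lemma gamma_far x y : y < 0 \/ 1 <= y -> gamma (x, y) = far_decode x y.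
Proof.
  intros Hy; unfold gamma; simpl.
  destruct (Rlt_dec y 0); [easy|]; destruct (Rle_dec y 0); [lra|].
  destruct (Rlt_dec y 1); [lra | easy].
Qed.

Lemma gamma_zero x : gamma (x, 0) = x.
Proof.
  unfold gamma; simpl.
  destruct (Rlt_dec 0 0); [lra|]; destruct (Rle_dec 0 0); [easy | lra].
Qed.

Lemma gamma_near x y : 0 < y < 1 -> gamma (x, y) = interp dyadic (grid x) y.
Proof.
  intros Hy; unfold gamma; simpl.
  destruct (Rlt_dec y 0); [lra|]; destruct (Rle_dec y 0); [lra|].
  destruct (Rlt_dec y 1); [easy | lra].
Qed.

Lemma gamma_ge q : fst q <= gamma q.
Proof.
  destruct q as [x y]; simpl.
  assert (Hy : (y < 0 \/ 1 <= y) \/ y = 0 \/ 0 < y < 1) by lra.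
  destruct Hy as [Hy | [-> | Hy]].
  - rewrite gamma_far by easy.
    pose proof (far_decode_beyond x y Hy); pose proof (grid_bounds x 0).
    pose proof (dyadic_pos 0); lra.
  - rewrite gamma_zero; lra.
  - rewrite gamma_near by easy; pose proof (interp_dyadic_strip x y Hy); lra.
Qed.

Lemma gamma_phi u v : u <= v -> gamma (u, phi (u, v)) = v.
Proof.
  intros Huv; destruct (Rle_lt_dec v u) as [Hvu | Hvu].
  { rewrite phi_below, gamma_zero; lra. }
  destruct (Rlt_le_dec v (grid u 0)) as [Hv | Hv].
  - assert (Hstrip : u < v < grid u 0) by lra.
    rewrite phi_near, gamma_near by (auto using interp_grid_unit).
    now apply interp_gridK.
  - pose proof (beyond_strip u v Hv).
    rewrite phi_far, gamma_far by (auto using far_code_outside).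
    now apply far_codeK.
Qed.

Lemma phi_gamma q : phi (fst q, gamma q) = snd q.
Proof.
  destruct q as [x y]; simpl.
  assert (Hy : (y < 0 \/ 1 <= y) \/ y = 0 \/ 0 < y < 1) by lra.
  destruct Hy as [Hy | [-> | Hy]].
  - rewrite gamma_far, phi_far by (auto using far_decode_beyond).
    now apply far_decodeK.
  - rewrite gamma_zero; apply phi_below; lra.
  - rewrite gamma_near, phi_near by (auto using interp_dyadic_strip).
    now apply interp_dyadicK.
Qed.

Lemma phi_right_lipschitz_below u v : v < u -> right_lipschitz_at phi (u, v).
Proof.
  intros Hvu.
  apply (right_lipschitz_at_snd _ (fun _ => 0) 0 _ (fun _ => True) (fun t => t < u));
    [lra | intros; lra | apply near_right_true | now apply near_right_lt |].
  intros [q1 q2]; simpl; intros; apply phi_below; lra.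
Qed.

Lemma phi_right_lipschitz_diag u : right_lipschitz_at phi (u, u).
Proof.
  apply (right_lipschitz_at_intro _ _ 2 (fun _ => True) (fun t => t < u + 1));
    [lra | apply near_right_true | apply near_right_lt; simpl; lra |].
  intros [q1 q2]; simpl; intros Hq1 Hq2 _ Hq2'.
  rewrite (phi_below u u) by lra.
  destruct (Rle_lt_dec q2 q1) as [Hq | Hq]; [rewrite phi_below by easy; lra|].
  assert (Hstrip : q1 < q2 < grid q1 0)
    by (pose proof (grid_bounds q1 0); rewrite dyadic_0 in *; lra).
  rewrite phi_near by easy; destruct (grid_piece q1 q2 Hstrip) as [k Hk].
  pose proof (interp_mem _ _ (grid_decr q1) dyadic_decr q2 k Hk).
  pose proof (dyadic_pos (S k)).
  assert (interp (grid q1) dyadic q2 - 0 <= 2 * (q2 - q1)).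
  { apply (interp_le_limit _ _ (grid_decr q1) dyadic_decr q1 0 2 q2 k); [lra | | easy].
    intros j; pose proof (grid_bounds q1 (S j)); rewrite dyadic_S in *; lra. }
  lra.
Qed.

Lemma phi_right_lipschitz_near u v : u < v < grid u 0 -> right_lipschitz_at phi (u, v).
Proof.
  intros Hv; destruct (grid_piece u v Hv) as [k Hk].
  apply (right_lipschitz_at_snd _
           (affine_between (grid u (S k)) (grid u k) (dyadic (S k)) (dyadic k))
           ((dyadic k - dyadic (S k)) / (grid u k - grid u (S k))) _
           (fun t => (grid t k = grid u k /\ grid t (S k) = grid u (S k)) /\ t < v)
           (fun t => t < grid u k)).
  - pose proof (grid_decr u k); pose proof (dyadic_decr k).
    apply Rlt_le, Rdiv_lt_0_compat; lra.
  - apply affine_between_lipschitz; [apply grid_decr | apply dyadic_decr].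
  - apply near_right_and; [apply near_right_and; apply grid_near_right |].
    apply near_right_lt; simpl; lra.
  - apply near_right_lt; simpl; lra.
  - intros [q1 q2]; simpl; intros Hq1 Hq2 [[Hk1 Hk2] Hq1v] Hq2'.
    pose proof (decreasing_le (grid q1) (grid_decr q1) 0 k (Nat.le_0_l k)).
    rewrite phi_near by lra.
    rewrite (interp_eq _ _ (grid_decr q1) q2 k) by lra.
    now rewrite Hk1, Hk2.
Qed.

Lemma phi_right_lipschitz_far u v : grid u 0 <= v -> right_lipschitz_at phi (u, v).
Proof.
  intros Hv.
  apply (right_lipschitz_at_snd _ (fun t => far_code u v + (t - v)) 1 _
           (fun t => Int_part t = Int_part u) (fun t => Int_part t = Int_part v));
    [lra | intros; lra | apply near_right_Int_part | apply near_right_Int_part |].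
  intros [q1 q2]; simpl; intros Hq1 Hq2 Hu Hv'.
  rewrite phi_far by (rewrite grid_0, Hu; rewrite grid_0 in Hv; lra).
  now apply far_code_translate.
Qed.

Lemma phi_right_lipschitz p : right_lipschitz_at phi p.
Proof.
  destruct p as [u v].
  destruct (Rlt_or_le v u) as [Hvu | Huv]; [now apply phi_right_lipschitz_below|].
  destruct (Req_dec u v) as [<- | Huv']; [apply phi_right_lipschitz_diag|].
  destruct (Rlt_or_le v (grid u 0)).
  - apply phi_right_lipschitz_near; lra.
  - now apply phi_right_lipschitz_far.
Qed.

Lemma gamma_right_lipschitz_far x y :
  y < 0 \/ 1 <= y -> right_lipschitz_at gamma (x, y).
Proof.
  intros Hy.
  apply (right_lipschitz_at_snd _ (fun t => far_decode x y + (t - y)) 1 _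
           (fun t => Int_part t = Int_part x) (fun t => Int_part t = Int_part y));
    [lra | intros; lra | apply near_right_Int_part | apply near_right_Int_part |].
  intros [q1 q2]; simpl; intros Hq1 Hq2 Hx Hy'.
  rewrite gamma_far by (apply Int_part_neq0; rewrite Hy'; now apply Int_part_neq0).
  now apply far_decode_translate.
Qed.

Lemma gamma_right_lipschitz_axis x : right_lipschitz_at gamma (x, 0).
Proof.
  apply (right_lipschitz_at_intro _ _ 4 (fun _ => True) (fun t => t < 1));
    [lra | apply near_right_true | apply near_right_lt; simpl; lra |].
  intros [q1 q2]; simpl; intros Hq1 Hq2 _ Hq2'; rewrite gamma_zero.
  destruct (Req_dec q2 0) as [-> | Hq]; [rewrite gamma_zero; lra|].
  assert (Hunit : 0 < q2 < 1) by lra.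
  rewrite gamma_near by easy; destruct (dyadic_piece q2 Hunit) as [k Hk].
  pose proof (interp_mem _ _ dyadic_decr (grid_decr q1) q2 k Hk).
  pose proof (grid_bounds q1 (S k)); pose proof (dyadic_pos (S k)).
  assert (interp dyadic (grid q1) q2 - q1 <= 4 * (q2 - 0)).
  { apply (interp_le_limit _ _ dyadic_decr (grid_decr q1) 0 q1 4 q2 k); [lra | | easy].
    intros j; pose proof (grid_bounds q1 j); rewrite dyadic_S; lra. }
  lra.
Qed.

Lemma gamma_right_lipschitz_near x y : 0 < y < 1 -> right_lipschitz_at gamma (x, y).
Proof.
  intros Hy; destruct (dyadic_piece y Hy) as [k Hk].
  apply (right_lipschitz_at_snd _
           (affine_between (dyadic (S k)) (dyadic k) (grid x (S k)) (grid x k))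
           ((grid x k - grid x (S k)) / (dyadic k - dyadic (S k))) _
           (fun t => grid t k = grid x k /\ grid t (S k) = grid x (S k))
           (fun t => t < dyadic k)).
  - pose proof (grid_decr x k); pose proof (dyadic_decr k).
    apply Rlt_le, Rdiv_lt_0_compat; lra.
  - apply affine_between_lipschitz; [apply dyadic_decr | apply grid_decr].
  - apply near_right_and; apply grid_near_right.
  - apply near_right_lt; simpl; lra.
  - intros [q1 q2]; simpl; intros Hq1 Hq2 [Hk1 Hk2] Hq2'.
    pose proof (decreasing_le dyadic dyadic_decr 0 k (Nat.le_0_l k)).
    rewrite dyadic_0 in *.
    rewrite gamma_near by lra.
    rewrite (interp_eq _ _ dyadic_decr q2 k) by lra.
    now rewrite Hk1, Hk2.
Qed.

Lemma gamma_right_lipschitz q : right_lipschitz_at gamma q.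
Proof.
  destruct q as [x y].
  assert (Hy : (y < 0 \/ 1 <= y) \/ y = 0 \/ 0 < y < 1) by lra.
  destruct Hy as [Hy | [-> | Hy]].
  - now apply gamma_right_lipschitz_far.
  - apply gamma_right_lipschitz_axis.
  - now apply gamma_right_lipschitz_near.
Qed.

Theorem theorem4p3 : Delta2_homeomorphic_S2.
Proof.
  exists (fun d => (fst (proj1_sig d), phi (proj1_sig d))),
         (fun q => exist _ (fst q, gamma q) (gamma_ge q)).
  split; [| split; [| split]].
  - intros [[u v] Huv]; apply subset_eq_compat; simpl in *.
    now rewrite gamma_phi.
  - intros q; simpl; rewrite phi_gamma; now destruct q.
  - intros W HW; exists (fun p => W (fst p, phi p)); split; [|easy].
    exact (sorgenfrey2_open_fibered phi W phi_right_lipschitz HW).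
  - intros O [W [HW HO]].
    apply (sorgenfrey2_open_ext (fun q => W (fst q, gamma q))).
    + intros q; symmetry; apply HO.
    + exact (sorgenfrey2_open_fibered gamma W gamma_right_lipschitz HW).
Qed.
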